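(* Let $I_1,I_2,J$ be intervals of $B$. Suppose $I_1$ and $I_2$ are of the same type, and $J$ is not of the same type as $I_1$ nor as $I_2$. Then every composition of morphisms $k_{I_1}\to k_J\to k_{I_2}$ is zero.
   Context: Let $k$ be a field. The bipath poset $B$ has underlying set $(\mathbb{R}\times\{1,2\})\sqcup\{-\infty,+\infty\}$. Its order is: $x\le y$ iff $x=-\infty$, or $y=+\infty$, or $x=(s,i)$, $y=(t,i)$ with the same $i$ and $s\le t$. $B$-persistence modules are functors from $B$ (as a category) to $k$-vector spaces, with morphisms the natural transformations. An interval of $B$ is a nonempty convex and connected subset (convex: $p,q\in I$, $p\le r\le q$ imply $r\in I$; connected: any two elements are joined by a finite sequence in $I$ with consecutive ones comparable). The interval module $k_I$ is $k$ on $I$ and $0$ elsewhere, with identity maps within $I$ and zero maps otherwise. The types of intervals are: - $\mathcal{U}$: intervals contained in $\mathbb{R}\times\{1\}$; - $\mathcal{D}$: intervals contained in $\mathbb{R}\times\{2\}$; - $\mathcal{B}=\{B\}$; - $\mathcal{L}$: intervals $\neq B$ containing $-\infty$; - $\mathcal{R}$: intervals $\neq B$ containing $+\infty$. Two intervals are of the same type if they lie in the same one of these five sets. *)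

From Stdlib Require Import Reals.
From mathcomp Require Import all_boot all_order all_algebra.

Set Implicit Arguments. Unset Strict Implicit. Unset Printing Implicit Defensive.
Import GRing.Theory.
Local Open Scope ring_scope.

Inductive branch := br1 | br2.

(* Underlying set of the bipath poset: (R x {1,2}) + {-oo, +oo}. *)
Inductive Bpt :=
| Bbot : Bpt
| Btop : Bpt
| Bp : Rdefinitions.R -> branch -> Bpt.

Definition Ble (x y : Bpt) : Prop :=
  match x, y with
  | Bbot, _ => True
  | _, Btop => True
  | Bp s i, Bp t j => i = j /\ Rle s t
  | _, _ => False
  end.

Definition Bcomparable (x y : Bpt) : Prop := Ble x y \/ Ble y x.

Definition convex (I : pred Bpt) : Prop :=
  forall p q r, I p -> I q -> Ble p r -> Ble r q -> I r.

Definition connected (I : pred Bpt) : Prop :=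
  forall p q, I p -> I q ->
    exists (n : nat) (f : nat -> Bpt),
      f 0%N = p /\ f n = q /\
      (forall i, (i <= n)%N -> I (f i)) /\
      (forall i, (i < n)%N -> Bcomparable (f i) (f i.+1)).

Definition is_interval (I : pred Bpt) : Prop :=
  (exists x, I x) /\ convex I /\ connected I.

Definition typeU (I : pred Bpt) : Prop := forall x, I x -> exists s, x = Bp s br1.
Definition typeD (I : pred Bpt) : Prop := forall x, I x -> exists s, x = Bp s br2.
Definition typeB (I : pred Bpt) : Prop := forall x, I x.
Definition typeL (I : pred Bpt) : Prop := I Bbot /\ ~ typeB I.
Definition typeR (I : pred Bpt) : Prop := I Btop /\ ~ typeB I.

Definition same_type (I J : pred Bpt) : Prop :=
  (typeU I /\ typeU J) \/ (typeD I /\ typeD J) \/ (typeB I /\ typeB J) \/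
  (typeL I /\ typeL J) \/ (typeR I /\ typeR J).

(* Interval module k_I: at x it is k^(dim I x), i.e. k if x \in I and 0
   otherwise; vectors are row vectors, linear maps are matrices acting
   on the right (v |-> v *m A). *)
Definition idim (I : pred Bpt) (x : Bpt) : nat := I x.

Definition imap (k : fieldType) (I : pred Bpt) (x y : Bpt)
  : 'M[k]_(idim I x, idim I y) :=
  \matrix_(i, j) (if I x && I y then 1 else 0).

Definition is_morphism (k : fieldType) (I J : pred Bpt)
  (phi : forall x, 'M[k]_(idim I x, idim J x)) : Prop :=
  forall x y, Ble x y -> imap k I x y *m phi y = phi x *m imap k J x y.

(* Every stalk of an interval module is k or 0, so a morphism k_I -> k_J is a
   family of scalars, and naturality kills it at x as soon as some point below
   x lies in I but not in J, or some point above x lies in J but not in I.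
   Since -oo and +oo are comparable to everything, it suffices to look at
   them.  A case analysis on the common type of I1 and I2 shows that, at any
   point of I1 and J, one of the two factors is killed this way; for U and D
   the point is that an interval avoiding -oo and +oo stays on one branch. *)
From Stdlib Require Import Reals.
From mathcomp Require Import all_boot all_order all_algebra.
Local Open Scope ring_scope.
Import GRing.Theory.

Lemma ord_idim_mem {I : pred Bpt} {x} (i : 'I_(idim I x)) : I x.
Proof. by case: i; rewrite /idim; case: (I x). Qed.

Lemma ord_idim_eq {I : pred Bpt} {x} (i j : 'I_(idim I x)) : i = j.
Proof. by apply: val_inj; case: i j => [[|i]] + [[|j]] //=; rewrite /idim; case: (I x). Qed.

Lemma imapE (k : fieldType) (I : pred Bpt) x y i j : imap k I x y i j = 1.
Proof. by rewrite mxE (ord_idim_mem i) (ord_idim_mem j). Qed.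

Section IdimProduct.
Context {k : fieldType} {I : pred Bpt} {x : Bpt} {m n : nat}.
Implicit Types (A : 'M[k]_(m, idim I x)) (B : 'M[k]_(idim I x, n)).

Lemma mulmx_idimE (l : 'I_(idim I x)) A B i j : (A *m B) i j = A i l * B l j.
Proof.
rewrite mxE (bigD1 l) //= big1 ?addr0 // => l' /eqP; by rewrite (ord_idim_eq l' l).
Qed.

Lemma mulmx_idim0 A B : ~~ I x -> A *m B = 0.
Proof.
move=> nIx; apply/matrixP => i j; rewrite !mxE big1 // => l _.
by have := ord_idim_mem l; rewrite (negbTE nIx).
Qed.

End IdimProduct.

Section MorphismVanishing.
Context {k : fieldType} {I J : pred Bpt} {phi : forall x, 'M[k]_(idim I x, idim J x)}.
Hypothesis phi_morph : is_morphism phi.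

Lemma morphism_eq0_below x' x : Ble x' x -> I x' -> ~~ J x' -> phi x = 0.
Proof.
move=> le_x'x Ix' nJx'; apply/matrixP => i l.
have i' : 'I_(idim I x') by apply: (@Ordinal _ 0); rewrite /idim Ix'.
have := congr1 (fun M : 'M[k]_(_, _) => M i' l) (phi_morph _ _ le_x'x).
by rewrite (mulmx_idimE i) imapE mul1r mulmx_idim0 // !mxE.
Qed.

Lemma morphism_eq0_above x y : Ble x y -> J y -> ~~ I y -> phi x = 0.
Proof.
move=> le_xy Jy nIy; apply/matrixP => i l.
have l' : 'I_(idim J y) by apply: (@Ordinal _ 0); rewrite /idim Jy.
have := congr1 (fun M : 'M[k]_(_, _) => M i l') (phi_morph _ _ le_xy).
by rewrite [RHS](mulmx_idimE l) imapE mulr1 mulmx_idim0 // !mxE.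
Qed.

End MorphismVanishing.

Lemma Ble_bot x : Ble Bbot x. Proof. by case: x. Qed.
Lemma Ble_top x : Ble x Btop. Proof. by case: x. Qed.

Definition hom_obstructed (I J : pred Bpt) : bool :=
  (I Bbot && ~~ J Bbot) || (J Btop && ~~ I Btop).

Lemma morphism_eq0 {k : fieldType} {I J : pred Bpt}
    {phi : forall x, 'M[k]_(idim I x, idim J x)} :
  is_morphism phi -> hom_obstructed I J -> forall x, phi x = 0.
Proof.
move=> phi_morph /orP[/andP[IB nJB]|/andP[JT nIT]] x.
- exact: morphism_eq0_below phi_morph _ _ (Ble_bot x) IB nJB.
- exact: morphism_eq0_above phi_morph _ _ (Ble_top x) JT nIT.
Qed.

Lemma convex_typeB (I : pred Bpt) : convex I -> I Bbot -> I Btop -> typeB I.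
Proof. by move=> cI IB IT z; apply: cI IB IT (Ble_bot z) (Ble_top z). Qed.

Lemma connected_on_branch (J : pred Bpt) b s :
  connected J -> ~~ J Bbot -> ~~ J Btop -> J (Bp s b) ->
  forall z, J z -> exists t, z = Bp t b.
Proof.
move=> cJ nJB nJT Js z Jz.
have [n [f [f0 [<- [Jf comp_f]]]]] := cJ _ _ Js Jz.
suff f_on_b i : (i <= n)%N -> exists t, f i = Bp t b by exact: f_on_b.
elim: i => [|i IH] i_le_n; first by exists s.
have [t ft] := IH (ltnW i_le_n).
move: (comp_f _ i_le_n) (Jf _ i_le_n); rewrite ft.
case: (f i.+1) => [| |u c]; rewrite ?(negbTE nJB) ?(negbTE nJT) //.
by case=> [[-> _]|[-> _]] _; exists u.
Qed.

Lemma same_branch_obstructed {I1 I2 J : pred Bpt} {b x} :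
  connected J ->
  (forall z, I1 z -> exists s, z = Bp s b) ->
  (forall z, I2 z -> exists s, z = Bp s b) ->
  ~ (forall z, J z -> exists t, z = Bp t b) ->
  I1 x -> J x -> hom_obstructed I1 J || hom_obstructed J I2.
Proof.
move=> cJ br1 br2 nbrJ I1x Jx.
have [JT|nJT] := boolP (J Btop).
  have nI1T : ~~ I1 Btop by apply/negP => /br1 [].
  by rewrite /hom_obstructed JT nI1T orbT.
have [JB|nJB] := boolP (J Bbot).
  have nI2B : ~~ I2 Bbot by apply/negP => /br2 [].
  by rewrite /hom_obstructed JB nI2B !orbT.
have [s xs] := br1 x I1x; rewrite xs in Jx.
by case: nbrJ; apply: connected_on_branch Jx.
Qed.

Lemma type_mismatch_obstructed {I1 I2 J : pred Bpt} {x} :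
  convex I1 -> convex I2 -> convex J -> connected J ->
  same_type I1 I2 -> ~ same_type I1 J ->
  I1 x -> J x -> hom_obstructed I1 J || hom_obstructed J I2.
Proof.
move=> cI1 cI2 cJ kJ st nst I1x Jx.
case: st => [[U1 U2]|[[D1 D2]|[[B1 B2]|[[[L1 nB1] [L2 _]]|[[R1 nB1] [R2 nB2]]]]]].
- by apply: (same_branch_obstructed kJ U1 U2) I1x Jx => UJ; apply: nst; left.
- by apply: (same_branch_obstructed kJ D1 D2) I1x Jx => DJ; apply: nst; right; left.
all: rewrite /hom_obstructed.
- have [JB|_] := boolP (J Bbot); last by rewrite B1.
  have [JT|_] := boolP (J Btop); last by rewrite !B2 /= !orbT.
  by case: nst; right; right; left; split=> //; apply: convex_typeB.
- have [JT|nJT] := boolP (J Btop).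
    have nI1T : ~~ I1 Btop by apply/negP => I1T; apply: nB1; apply: convex_typeB.
    by rewrite nI1T orbT.
  have [JB|_] := boolP (J Bbot); last by rewrite L1.
  by case: nst; do 3 right; left; split=> //; split=> // /(_ Btop); apply/negP.
- have [JB|nJB] := boolP (J Bbot).
    have nI2B : ~~ I2 Bbot by apply/negP => I2B; apply: nB2; apply: convex_typeB.
    by rewrite nI2B !orbT.
  have [JT|_] := boolP (J Btop); last by rewrite R2 /= !orbT.
  by case: nst; do 4 right; split=> //; split=> // /(_ Bbot); apply/negP.
Qed.

Theorem corollary4p5 (k : fieldType) (I1 I2 J : pred Bpt) :
  is_interval I1 -> is_interval I2 -> is_interval J ->
  same_type I1 I2 -> ~ same_type I1 J -> ~ same_type I2 J ->
  forall (phi : forall x, 'M[k]_(idim I1 x, idim J x))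
         (psi : forall x, 'M[k]_(idim J x, idim I2 x)),
  is_morphism phi -> is_morphism psi ->
  forall x, phi x *m psi x = 0.
Proof.
move=> [_ [cI1 _]] [_ [cI2 _]] [_ [cJ kJ]] st nst1 _ phi psi phi_morph psi_morph x.
apply/matrixP => i j; rewrite [LHS]mxE [RHS]mxE; apply: big1 => l _.
have := type_mismatch_obstructed cI1 cI2 cJ kJ st nst1 (ord_idim_mem i) (ord_idim_mem l).
case/orP => [/(morphism_eq0 phi_morph) phi0|/(morphism_eq0 psi_morph) psi0].
- by rewrite phi0 mxE mul0r.
- by rewrite psi0 mxE mulr0.
Qed.
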